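(* Let $\mathcal{B}=(T,\bowtie)$ be a block of transactions and let $\mathcal S$ be a valid schedule of $\mathcal{B}$. Then the scheduling-graph scheduler $GBR$ run on $\mathcal S$ is sequentially deterministic: there exists a total order $\tau$ of $T$ such that, for every initial global state, every execution of $GBR$ on $\mathcal S$ from that state produces the same result for every transaction and the same final global state as executing the transactions of $T$ one at a time, without concurrency, in the order $\tau$ from that state.
   Context: A block is a finite set $T$ of transactions. Each transaction $tx$ operates on objects of a global state, is deterministic (its effect and returned result depend only on its input parameters and the values it reads), and is associated with a read-set $R(tx)$ and a write-set $W(tx)$ containing all objects it may read, respectively write, in any possible execution. Two distinct transactions $tx_1,tx_2$ conflict, written $tx_1\bowtie tx_2$, if $R(tx_1)\cap W(tx_2)\neq\emptyset$, or $W(tx_1)\cap R(tx_2)\neq\emptyset$, or $W(tx_1)\cap W(tx_2)\neq\emptyset$. A schedule is a set $\mathcal S\subseteq T\times T$ such that the directed graph $(T,\mathcal S)$ is acyclic; it is valid if for every pair $tx\bowtie tx'$ the graph $(T,\mathcal S)$ contains a directed path from $tx$ to $tx'$ or from $tx'$ to $tx$. The scheduler $GBR$ executes a schedule $\mathcal S$ by running each transaction in its own thread; the thread of $tx$ waits until every $tx'$ with $(tx',tx)\in\mathcal S$ has finished executing (signalled only after $tx'$ has completed), then reads the latest version of each object in $R(tx)$, executes $tx$, stores the new values of $W(tx)$, emits the result of $tx$, and signals all $tx''$ with $(tx,tx'')\in\mathcal S$. Transactions not ordered by such waiting may run concurrently. *)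

From mathcomp Require Import all_boot.
Set Implicit Arguments. Unset Strict Implicit. Unset Printing Implicit Defensive.

(* A block: transactions are the elements of a finite type T; objects of the *)
(* global state live in an eqType O, and hold values of type V; a global     *)
(* state is a map O -> V.  Each transaction t has a finite read-set R t and  *)
(* write-set W t (sequences of objects) and an effect                         *)
(*     eff t : (O -> V) -> (O -> option V) * Res                             *)
(* mapping the state it reads to the updates it performs (Some v = write v,  *)
(* None = no write) together with its result.                               *)

Section Block.
Variables (T : finType) (O : eqType) (V Res : Type).
Variables (R W : T -> seq O) (eff : T -> (O -> V) -> (O -> option V) * Res).

Definition deterministic_tx : Prop :=
  forall t (s1 s2 : O -> V), {in R t, s1 =1 s2} -> eff t s1 = eff t s2.

Definition writes_in_W : Prop :=
  forall t (s : O -> V) o, o \notin W t -> (eff t s).1 o = None.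

Definition conflict (t1 t2 : T) : bool :=
  [&& t1 != t2 &
   [|| has (mem (W t2)) (R t1), has (mem (R t2)) (W t1) | has (mem (W t2)) (W t1)]].

Definition apply_upd (u : O -> option V) (s : O -> V) : O -> V :=
  fun o => odflt (s o) (u o).

Fixpoint seq_run (l : seq T) (s : O -> V) (res : T -> option Res)
  : (O -> V) * (T -> option Res) :=
  match l with
  | [::] => (s, res)
  | t :: l' =>
      let: (u, r) := eff t s in
      seq_run l' (apply_upd u s) (fun t' => if t' == t then Some r else res t')
  end.

Definition seq_exec (l : seq T) (s : O -> V) := seq_run l s (fun _ => None).
End Block.

(* Schedules: S : rel T, S t t' meaning the edge (t, t'). *)
Definition acyclic_sched (T : finType) (S : rel T) : Prop :=
  forall t t', S t t' -> ~~ connect S t' t.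

Definition valid_sched (T : finType) (O : eqType) (R W : T -> seq O) (S : rel T)
  : Prop :=
  forall t1 t2, conflict R W t1 t2 -> connect S t1 t2 || connect S t2 t1.

(* Operational semantics of GBR: one thread per transaction, arbitrary      *)
(* interleaving of the following atomic steps.                               *)
Inductive thread_status (O V Res : Type) :=
| NotStarted
| Reading of (O -> option V)              (* values read so far *)
| Writing of (O -> option V) & Res        (* pending writes, computed result *)
| Done of Res.
Arguments NotStarted {O V Res}.
Arguments Reading {O V Res}.
Arguments Writing {O V Res}.
Arguments Done {O V Res}.

Record config (T : finType) (O V Res : Type) := Config {
  store : O -> V;
  status : T -> thread_status O V Res }.

Section GBR.
Variables (T : finType) (O : eqType) (V Res : Type).
Variables (R W : T -> seq O) (eff : T -> (O -> V) -> (O -> option V) * Res).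
Variable (S : rel T).

Definition upd_status (f : T -> thread_status O V Res) t x :=
  fun t' => if t' == t then x else f t'.

Definition upd_fun (A : eqType) (B : Type) (f : A -> B) (a : A) (b : B) :=
  fun a' => if a' == a then b else f a'.

Definition is_done (x : thread_status O V Res) :=
  if x is Done _ then true else false.

Inductive gbr_step : config T O V Res -> config T O V Res -> Prop :=
| step_start st f t :
    f t = NotStarted ->
    (forall t', S t' t -> is_done (f t')) ->
    gbr_step (Config st f) (Config st (upd_status f t (Reading (fun _ => None))))
| step_read st f t buf o :
    f t = Reading buf -> o \in R t -> buf o = None ->
    gbr_step (Config st f)
      (Config st (upd_status f t (Reading (upd_fun buf o (Some (st o))))))
| step_exec st f t buf :
    f t = Reading buf -> (forall o, o \in R t -> buf o <> None) ->
    gbr_step (Config st f)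
      (Config st (upd_status f t
         (Writing (eff t (fun o => odflt (st o) (buf o))).1
                  (eff t (fun o => odflt (st o) (buf o))).2)))
| step_write st f t pend r o v :
    f t = Writing pend r -> pend o = Some v ->
    gbr_step (Config st f)
      (Config (upd_fun st o v) (upd_status f t (Writing (upd_fun pend o None) r)))
| step_finish st f t pend r :
    f t = Writing pend r -> (forall o, pend o = None) ->
    gbr_step (Config st f) (Config st (upd_status f t (Done r))).

Inductive gbr_steps : config T O V Res -> config T O V Res -> Prop :=
| steps_refl c : gbr_steps c c
| steps_cons c1 c2 c3 : gbr_step c1 c2 -> gbr_steps c2 c3 -> gbr_steps c1 c3.

Definition gbr_init (s0 : O -> V) : config T O V Res :=
  Config s0 (fun _ => NotStarted).

Definition gbr_reachable (s0 : O -> V) (c : config T O V Res) : Prop :=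
  gbr_steps (gbr_init s0) c.

Definition gbr_complete (c : config T O V Res) : Prop :=
  forall t, is_done (status c t).
End GBR.

From mathcomp Require Import all_boot.
Set Implicit Arguments. Unset Strict Implicit. Unset Printing Implicit Defensive.

(* Let tau list the transactions by increasing number of S-ancestors, a
   topological sort of the acyclic schedule.  Validity turns every conflict
   into an S-path oriented along tau, and GBR only starts a thread once all of
   its S-predecessors are done.  Hence when a thread t reads or writes an
   object o, every earlier writer of o has finished and no later writer of o
   has started.  This gives the invariant: every value read is the one the
   sequential tau-run would provide, and the store is what results from
   applying, in tau order, the writes performed so far. *)

Section TopologicalOrder.
Variables (T : finType) (S : rel T).
Hypothesis S_acyclic : acyclic_sched S.

Lemma connect_antisym a b : connect S a b -> connect S b a -> a = b.
Proof.
case/connectP => -[|z p] /= => [_ -> //|/andP [Saz Sp] Eb Cba].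
have Cza : connect S z a by apply: connect_trans Cba; apply/connectP; exists p.
by move: (S_acyclic Saz); rewrite Cza.
Qed.

Definition rank t := #|[pred x | connect S x t]|.

Lemma rank_lt a b : connect S a b -> a != b -> rank a < rank b.
Proof.
move=> Cab Nab; apply: proper_card; apply/properP; split.
  by apply/subsetP => x; rewrite !inE => Cxa; apply: connect_trans Cxa Cab.
exists b; rewrite !inE ?connect0 //.
by apply: contra Nab => /(connect_antisym Cab) ->.
Qed.

Definition topo := sort (fun a b => rank a <= rank b) (enum T).

Lemma perm_topo : perm_eq topo (enum T).
Proof. exact/permPl/perm_sort. Qed.

Lemma uniq_topo : uniq topo.
Proof. by rewrite (perm_uniq perm_topo) enum_uniq. Qed.

Lemma mem_topo t : t \in topo.
Proof. by rewrite (perm_mem perm_topo) mem_enum. Qed.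

Lemma topo_cat l1 l2 a b : topo = l1 ++ l2 -> a \in l1 -> b \in l2 ->
  ~~ connect S b a.
Proof.
move=> E a1 b2.
have : pairwise (fun a b => rank a <= rank b) topo.
  rewrite -sorted_pairwise; last by move=> y x z; apply: leq_trans.
  by apply: sort_sorted => x y; apply: leq_total.
rewrite E pairwise_cat => /and3P [/allrelP rank_le _ _].
have : uniq (l1 ++ l2) by rewrite -E uniq_topo.
rewrite cat_uniq => /and3P [_ /hasPn disj _].
have Nba : b != a by apply: contraNneq (disj b b2) => ->.
by apply/negP => /rank_lt /(_ Nba); rewrite ltnNge rank_le.
Qed.

Lemma topo_cat_neq l1 l2 a b : topo = l1 ++ l2 -> a \in l1 -> b \in l2 -> a != b.
Proof. by move=> E a1 b2; apply: contraNneq (topo_cat E a1 b2) => ->; rewrite connect0. Qed.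

Definition topo_pre t := take (index t topo) topo.
Definition topo_post t := drop (index t topo).+1 topo.

Lemma topo_split t : topo = topo_pre t ++ t :: topo_post t.
Proof.
have Ht : index t topo < size topo by rewrite index_mem mem_topo.
by rewrite -{1}(cat_take_drop (index t topo) topo) (drop_nth t Ht) nth_index ?mem_topo.
Qed.

Lemma topo_split_rcons t : topo = rcons (topo_pre t) t ++ topo_post t.
Proof. by rewrite cat_rcons -topo_split. Qed.

Lemma topo_pre_cat l1 t l2 : topo = l1 ++ t :: l2 -> topo_pre t = l1.
Proof.
move=> E; have Nt : t \notin l1.
  by apply/negP => t1; have := topo_cat_neq E t1 (mem_head t l2); rewrite eqxx.
by rewrite /topo_pre {1}E index_cat (negbTE Nt) /= eqxx addn0 E take_size_cat.
Qed.

End TopologicalOrder.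

Section SequentialRun.
Variables (T : finType) (O : eqType) (V Res : Type).
Variable eff : T -> (O -> V) -> (O -> option V) * Res.

Lemma seq_run_rcons l t s res :
  seq_run eff (rcons l t) s res =
  let p := seq_run eff l s res in
  (apply_upd (eff t p.1).1 p.1,
   fun t' => if t' == t then Some (eff t p.1).2 else p.2 t').
Proof.
elim: l s res => [|t' l IH] s res /=; first by case: (eff t s).
by case: (eff t' s) => u r; rewrite IH.
Qed.

Definition last_write (e : T -> O -> option V) o (x : V) l :=
  foldl (fun x t => odflt x (e t o)) x l.

Lemma last_write_cat e o x l1 l2 :
  last_write e o x (l1 ++ l2) = last_write e o (last_write e o x l1) l2.
Proof. exact: foldl_cat. Qed.

Lemma last_write_cons e o x t l :
  last_write e o x (t :: l) = last_write e o (odflt x (e t o)) l.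
Proof. by []. Qed.

Lemma eq_last_write e1 e2 o x l : {in l, forall t, e1 t o = e2 t o} ->
  last_write e1 o x l = last_write e2 o x l.
Proof.
elim: l x => [|t l IH] x //= E; rewrite /last_write /= E ?mem_head //.
by apply: IH => t' Ht'; rewrite E // inE Ht' orbT.
Qed.

Lemma last_write_silent e o x l : {in l, forall t, e t o = None} ->
  last_write e o x l = x.
Proof.
by move=> E; rewrite (@eq_last_write _ (fun _ _ => None)) //; elim: l {E} x.
Qed.

End SequentialRun.

Definition started (O V Res : Type) (x : thread_status O V Res) :=
  if x is NotStarted then false else true.

Section GBRCorrectness.
Variables (T : finType) (O : eqType) (V Res : Type).
Variables (R W : T -> seq O) (eff : T -> (O -> V) -> (O -> option V) * Res).
Variable S : rel T.
Hypothesis eff_det : deterministic_tx R eff.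
Hypothesis eff_writes : writes_in_W W eff.
Hypothesis S_acyclic : acyclic_sched S.
Hypothesis S_valid : valid_sched R W S.

Local Notation topo := (topo S).

Definition accesses t o := (o \in R t) || (o \in W t).

Lemma eff_write_in_W t s o v : (eff t s).1 o = Some v -> o \in W t.
Proof. by apply: contraPT => /eff_writes ->. Qed.

Lemma topo_access_connect l1 l2 a b o : topo = l1 ++ l2 -> a \in l1 -> b \in l2 ->
  accesses a o -> accesses b o -> (o \in W a) || (o \in W b) -> connect S a b.
Proof.
move=> E a1 b2 Aa Ab Wab; have Nab := topo_cat_neq S_acyclic E a1 b2.
have Cab : conflict R W a b.
  rewrite /conflict Nab; apply/or3P; have [Wa|Na] := boolP (o \in W a).
    by case/orP: Ab => Xb; [apply: Or32 | apply: Or33]; apply/hasP; exists o.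
  rewrite (negbTE Na) /= in Wab.
  by case/orP: Aa => Xa; [apply: Or31 | apply: Or33]; apply/hasP; exists o.
by have := S_valid Cab; rewrite (negbTE (topo_cat S_acyclic E a1 b2)) orbF.
Qed.

Definition respects_sched (f : T -> thread_status O V Res) :=
  forall t t', S t' t -> started (f t) -> is_done (f t').

Lemma respects_sched_connect f a b : respects_sched f ->
  connect S a b -> a != b -> started (f b) -> is_done (f a).
Proof.
move=> Hf /connectP [p]; elim: p a => [|z p IH] a /=; first by move=> _ ->; rewrite eqxx.
case/andP => Saz Sp Eb Nab Sb; apply: (Hf z a Saz).
have [-> //|Nzb] := eqVneq z b.
by move: (IH z Sp Eb Nzb Sb); case: (f z).
Qed.

Section FromInitialState.
Variable s0 : O -> V.

Definition input t := (seq_exec eff (topo_pre S t) s0).1.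
Definition upd t := (eff t (input t)).1.
Definition result t := (eff t (input t)).2.

Lemma seq_exec_topo_prefix l1 l2 : topo = l1 ++ l2 ->
  (forall o, (seq_exec eff l1 s0).1 o = last_write upd o (s0 o) l1) /\
  forall t, (seq_exec eff l1 s0).2 t = if t \in l1 then Some (result t) else None.
Proof.
elim/last_ind: l1 l2 => [|l t IH] l2 E; first by [].
rewrite cat_rcons in E; have [IH1 IH2] := IH _ E.
have Et : input t = (seq_exec eff l s0).1 by rewrite /input (topo_pre_cat S_acyclic E).
rewrite /seq_exec seq_run_rcons /= -/(seq_exec _ _ _) -Et; split => [o|t'].
  by rewrite /apply_upd -/(upd t) Et IH1 -cats1 last_write_cat.
by rewrite mem_rcons inE; case: eqP => [->|_] //; apply: IH2.
Qed.

Definition written (x : thread_status O V Res) t o : option V :=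
  match x with
  | Done _ => upd t o
  | Writing pend _ => if pend o is None then upd t o else None
  | _ => None
  end.

Lemma written_Some x t o v : written x t o = Some v -> started x /\ upd t o = Some v.
Proof. by case: x => [|buf|pend r|r] //=; case: (pend o). Qed.

Lemma written_upd_None x t o : upd t o = None -> written x t o = None.
Proof. by case: x => [|buf|pend r|r] //=; case: (pend o). Qed.

Definition status_ok t (x : thread_status O V Res) : Prop :=
  match x with
  | NotStarted => True
  | Reading buf => forall o v, buf o = Some v -> v = input t o
  | Writing pend r => r = result t /\ forall o v, pend o = Some v -> upd t o = Some v
  | Done r => r = result t
  end.

Definition store_matches (st : O -> V) (f : T -> thread_status O V Res) :=
  forall o, st o = last_write (fun t => written (f t) t) o (s0 o) topo.

Definition gbr_inv (c : config T O V Res) :=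
  [/\ respects_sched (status c), forall t, status_ok t (status c t)
    & store_matches (store c) (status c)].

Lemma later_writers_silent f t t' o : respects_sched f -> ~~ is_done (f t) ->
  accesses t o -> t' \in topo_post S t -> written (f t') t' o = None.
Proof.
move=> Hf Nt At Ht'; case Ew: (written _ t' o) => [v|] //.
have [St' /eff_write_in_W Wo] := written_Some Ew.
have E := topo_split_rcons S t.
have t_in : t \in rcons (topo_pre S t) t by rewrite mem_rcons mem_head.
have Ctt' : connect S t t'.
  by apply: topo_access_connect E t_in Ht' At _ _; rewrite /accesses Wo orbT.
have Ntt' := topo_cat_neq S_acyclic E t_in Ht'.
by move: Nt; rewrite (respects_sched_connect Hf Ctt' Ntt' St').
Qed.

Lemma earlier_writers_done f t t' o : respects_sched f -> started (f t) ->
  accesses t o -> t' \in topo_pre S t -> written (f t') t' o = upd t' o.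
Proof.
move=> Hf St At Ht'; case E: (upd t' o) => [v|]; last exact: written_upd_None.
have Wo := eff_write_in_W E; have t_in := mem_head t (topo_post S t).
have Ct't : connect S t' t.
  by apply: topo_access_connect (topo_split S t) Ht' t_in _ At _; rewrite /accesses Wo ?orbT.
have Nt't := topo_cat_neq S_acyclic (topo_split S t) Ht' t_in.
by move: (respects_sched_connect Hf Ct't Nt't St) E; case: (f t').
Qed.

Lemma store_at_read st f t buf o : gbr_inv (Config st f) -> f t = Reading buf ->
  o \in R t -> st o = input t o.
Proof.
case=> /= Hf _ Hst Ht Ro.
have St : started (f t) by rewrite Ht.
have Nt : ~~ is_done (f t) by rewrite Ht.
have At : accesses t o by rewrite /accesses Ro.
rewrite Hst (topo_split S t) last_write_cat last_write_cons {2}/written Ht /=.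
rewrite last_write_silent => [|t' /(later_writers_silent Hf Nt At) //].
rewrite (@eq_last_write _ _ _ _ upd) => [|t' /(earlier_writers_done Hf St At) //].
by have [<- _] := seq_exec_topo_prefix (topo_split S t).
Qed.

Lemma respects_sched_upd f t x : respects_sched f ->
  started x = started (f t) -> (is_done (f t) -> is_done x) ->
  respects_sched (upd_status f t x).
Proof.
move=> Hf Sx Dx; rewrite /respects_sched /upd_status => t1 t2 S21.
have started' t' : started (if t' == t then x else f t') = started (f t').
  by case: eqP => [->|].
have done' t' : is_done (f t') -> is_done (if t' == t then x else f t').
  by case: eqP => [->|].
by rewrite started' => /(Hf _ _ S21) /done'.
Qed.

Lemma respects_sched_start f t : respects_sched f -> f t = NotStarted ->
  (forall t', S t' t -> is_done (f t')) ->
  respects_sched (upd_status f t (Reading (fun _ => None))).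
Proof.
move=> Hf Ht Hpred t1 t2 S21; rewrite /upd_status.
have [E1 _|N1 St1] := eqVneq t1 t.
  rewrite {}E1 in S21; have Nt2 : t2 != t.
    by apply: contraTneq S21 => ->; apply/negP => /S_acyclic; rewrite connect0.
  by rewrite (negbTE Nt2) Hpred.
have Dt2 := Hf _ _ S21 St1.
have Nt2 : t2 != t by apply: contraTneq Dt2 => ->; rewrite Ht.
by rewrite (negbTE Nt2).
Qed.

Lemma gbr_inv_upd_status st f t x : gbr_inv (Config st f) ->
  respects_sched (upd_status f t x) -> status_ok t x ->
  written x t =1 written (f t) t -> gbr_inv (Config st (upd_status f t x)).
Proof.
case=> /= _ Hok Hst Hf' OKx Wx; split => //= [t'|o].
  by rewrite /upd_status; case: eqP => [->|].
rewrite Hst; apply: eq_last_write => t' _; rewrite /upd_status.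
by case: eqP => [->|].
Qed.

Lemma gbr_inv_start st f t : gbr_inv (Config st f) -> f t = NotStarted ->
  (forall t', S t' t -> is_done (f t')) ->
  gbr_inv (Config st (upd_status f t (Reading (fun _ => None)))).
Proof.
move=> I Ht Hpred; have [Hf _ _] := I.
apply: gbr_inv_upd_status => //; first exact: respects_sched_start.
by move=> o; rewrite /written Ht.
Qed.

Lemma gbr_inv_read st f t buf o : gbr_inv (Config st f) -> f t = Reading buf ->
  o \in R t ->
  gbr_inv (Config st (upd_status f t (Reading (upd_fun buf o (Some (st o)))))).
Proof.
move=> I Ht Ro; have [Hf Hok _] := I.
apply: gbr_inv_upd_status => //.
- by apply: respects_sched_upd; rewrite ?Ht.
- move=> /= o' v; rewrite /upd_fun; case: eqP => [-> [<-]|_].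
    exact: store_at_read I Ht Ro.
  by have := Hok t; rewrite /= Ht; apply.
- by move=> o'; rewrite /written Ht.
Qed.

Lemma gbr_inv_exec st f t buf : gbr_inv (Config st f) -> f t = Reading buf ->
  (forall o, o \in R t -> buf o <> None) ->
  gbr_inv (Config st (upd_status f t
    (Writing (eff t (fun o => odflt (st o) (buf o))).1
             (eff t (fun o => odflt (st o) (buf o))).2))).
Proof.
move=> I Ht Hread; have [Hf Hok _] := I.
have -> : eff t (fun o => odflt (st o) (buf o)) = eff t (input t).
  apply: eff_det => o Ro; have := Hok t; rewrite /= Ht => Hbuf.
  by case Eb: (buf o) => [v|] /=; [exact: Hbuf Eb | case: (Hread o Ro Eb)].
apply: gbr_inv_upd_status => //.
- by apply: respects_sched_upd; rewrite ?Ht.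
- by move=> o; rewrite /written -/(upd t) Ht; case: (upd t o).
Qed.

Lemma gbr_inv_write st f t pend r o v : gbr_inv (Config st f) ->
  f t = Writing pend r -> pend o = Some v ->
  gbr_inv (Config (upd_fun st o v) (upd_status f t (Writing (upd_fun pend o None) r))).
Proof.
case=> /= Hf Hok Hst Ht Hpo.
have [Hr Hpend] : r = result t /\ forall o v, pend o = Some v -> upd t o = Some v.
  by have := Hok t; rewrite /= Ht.
have Huv := Hpend o v Hpo.
set f' := upd_status f t _.
have Hf' : respects_sched f' by apply: respects_sched_upd; rewrite ?Ht.
split => //= [t'|o'].
  rewrite /f' /upd_status; case: eqP => [->|_]; last exact: Hok.
  split=> [|o' v']; first exact: Hr.
  by rewrite /upd_fun; case: eqP => // _; apply: Hpend.
rewrite /upd_fun; have [->|No] := eqVneq o' o.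
  have Nt : ~~ is_done (f' t) by rewrite /f' /upd_status eqxx.
  have At : accesses t o by rewrite /accesses (eff_write_in_W Huv) orbT.
  have Wt : written (f' t) t o = Some v.
    by rewrite /f' /upd_status eqxx /= /upd_fun eqxx Huv.
  rewrite (topo_split S t) last_write_cat last_write_cons Wt /=.
  by rewrite last_write_silent // => t' /(later_writers_silent Hf' Nt At).
rewrite Hst; apply: eq_last_write => t' _; rewrite /f' /upd_status.
by case: eqP => [->|//]; rewrite /written Ht /upd_fun (negbTE No).
Qed.

Lemma gbr_inv_finish st f t pend r : gbr_inv (Config st f) ->
  f t = Writing pend r -> (forall o, pend o = None) ->
  gbr_inv (Config st (upd_status f t (Done r))).
Proof.
move=> I Ht Hnone; have [Hf Hok _] := I.
apply: gbr_inv_upd_status => //.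
- by apply: respects_sched_upd; rewrite ?Ht.
- by have := Hok t; rewrite /= Ht => -[].
- by move=> o; rewrite /written Ht Hnone.
Qed.

Lemma gbr_step_inv c c' : gbr_inv c -> gbr_step R eff S c c' -> gbr_inv c'.
Proof.
move=> I Hs; case: Hs I => [st f t Ht Hpred|st f t buf o Ht Ro _|st f t buf Ht Hread|
  st f t pend r o v Ht Hpo|st f t pend r Ht Hnone] I.
- exact: gbr_inv_start I Ht Hpred.
- exact: gbr_inv_read I Ht Ro.
- exact: gbr_inv_exec I Ht Hread.
- exact: gbr_inv_write I Ht Hpo.
- exact: gbr_inv_finish I Ht Hnone.
Qed.

Lemma gbr_reachable_inv c : gbr_reachable R eff S s0 c -> gbr_inv c.
Proof.
have : gbr_inv (gbr_init T Res s0).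
  by split => //= o; rewrite last_write_silent.
rewrite /gbr_reachable; move: (gbr_init T Res s0) => c0 I Hs.
by elim: Hs I => // c1 c2 c3 Hs _ IH I; apply: IH; apply: gbr_step_inv Hs.
Qed.

Lemma gbr_complete_seq_exec c : gbr_inv c -> gbr_complete c ->
  store c =1 (seq_exec eff topo s0).1 /\
  forall t, exists r, status c t = Done r /\ (seq_exec eff topo s0).2 t = Some r.
Proof.
case=> _ Hok Hst Hc; have [P1 P2] := seq_exec_topo_prefix (esym (cats0 topo)).
split => [o|t].
  rewrite Hst P1; apply: eq_last_write => t _.
  by move: (Hc t); rewrite /written; case: (status c t).
move: (Hc t) (Hok t); case: (status c t) => // r _ ->.
by exists (result t); rewrite P2 mem_topo.
Qed.

End FromInitialState.
End GBRCorrectness.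

Theorem theorem1 (T : finType) (O : eqType) (V Res : Type)
    (R W : T -> seq O) (eff : T -> (O -> V) -> (O -> option V) * Res)
    (S : rel T) :
  deterministic_tx R eff ->
  writes_in_W W eff ->
  acyclic_sched S ->
  valid_sched R W S ->
  exists tau : seq T,
    perm_eq tau (enum T) /\
    forall (s0 : O -> V) (c : config T O V Res),
      gbr_reachable R eff S s0 c -> gbr_complete c ->
      store c =1 (seq_exec eff tau s0).1 /\
      forall t, exists r, status c t = Done r /\ (seq_exec eff tau s0).2 t = Some r.
Proof.
move=> eff_det eff_writes S_acyclic S_valid.
exists (topo S); split => [|s0 c reach complete]; first exact: perm_topo.
have inv := gbr_reachable_inv eff_det eff_writes S_acyclic S_valid reach.
by apply: gbr_complete_seq_exec complete.
Qed.
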